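(* Let $n,T\in\mathbb{N}$. For $i=1,\dots,n$ and $t=1,\dots,T$ let $X_i(t),Y_i(t)$ be integrable real random variables, let $a_i\ge 0$ be fixed constants, and let $\beta_{\text{a}}(t)\in[0,1]$. Let $\pi_{\text{B}},\pi_{\text{in}}$ be real constants and $\pi_{\text{out}},\pi_{\text{grid}},\pi_{\text{rev}}$ constants with $\pi_{\text{grid}}\ge 0$, $\pi_{\text{rev}}\ge 0$. For $(C_{\text{a},1},\dots,C_{\text{a},n})\in[0,\infty)^n$ put $C_{\text{a}}=\sum_{i=1}^n C_{\text{a},i}$, $$P_{\text{in}}(t)=\sum_{i=1}^n\max\{a_iY_i(t)-X_i(t),0\},\qquad P_{\text{out}}(t)=\sum_{i=1}^n\min\{\max\{X_i(t)-a_iY_i(t),0\},\,C_{\text{a},i}\},$$ and $$J_{\text{a}}=\pi_{\text{B}}\sum_{i=1}^nC_{\text{a},i}+\sum_{t=1}^T\mathbb{E}\Big[\pi_{\text{in}}P_{\text{in}}(t)-\pi_{\text{out}}P_{\text{out}}(t)+\pi_{\text{grid}}\max\{P_{\text{out}}(t)-P_{\text{in}}(t)-\beta_{\text{a}}(t)C_{\text{a}},0\}+\pi_{\text{rev}}\max\{P_{\text{in}}(t)-P_{\text{out}}(t)-(1-\beta_{\text{a}}(t))C_{\text{a}},0\}\Big].$$ If $\pi_{\text{out}}\ge\pi_{\text{grid}}$, then $J_{\text{a}}$ is convex with respect to $(C_{\text{a},1},\dots,C_{\text{a},n})$.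
   Context: This is the cost of a manager who owns a joint battery of capacity $C_{\text{a}}$, allocated as daily purchase limits $C_{\text{a},i}$ to $n$ users; $a_i$ are the users' PV panel areas, $X_i(t)$ their daily consumption, $Y_i(t)$ the PV generation per unit area, $P_{\text{in}}(t)$ and $P_{\text{out}}(t)$ the total power bought from and sold to users, $\beta_{\text{a}}(t)C_{\text{a}}$ the stored power at the start of day $t$, $\pi_{\text{in}},\pi_{\text{out}}$ the buying and selling prices, $\pi_{\text{grid}}$ the price of power from the main grid, $\pi_{\text{rev}}$ the reverse-flow penalty, $\pi_{\text{B}}$ the unit storage cost. *)

From HB Require Import structures.
From mathcomp Require Import all_boot all_order all_algebra.
From mathcomp Require Import all_classical all_reals all_analysis.
Set Implicit Arguments. Unset Strict Implicit. Unset Printing Implicit Defensive.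
Import Order.TTheory GRing.Theory Num.Theory.
Local Open Scope ring_scope.

Section Cost.
Context {R : realType} {n : nat}.

Definition P_in (a x y : 'I_n -> R) : R :=
  \sum_(i < n) Num.max (a i * y i - x i) 0.

Definition P_out (a x y C : 'I_n -> R) : R :=
  \sum_(i < n) Num.min (Num.max (x i - a i * y i) 0) (C i).

Definition stage_cost (piin piout pigrid pirev beta : R)
    (a x y C : 'I_n -> R) : R :=
  let Pi := P_in a x y in
  let Po := P_out a x y C in
  let Ca := \sum_(i < n) C i in
  piin * Pi - piout * Po
  + pigrid * Num.max (Po - Pi - beta * Ca) 0
  + pirev * Num.max (Pi - Po - (1 - beta) * Ca) 0.

Definition J_a {d} {Omega : measurableType d} (Pr : probability Omega R)
    {T : nat} (X Y : 'I_n -> 'I_T -> Omega -> R) (a : 'I_n -> R)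
    (beta : 'I_T -> R) (piB piin piout pigrid pirev : R)
    (C : 'I_n -> R) : R :=
  piB * (\sum_(i < n) C i)
  + \sum_(t < T) Rintegral Pr setT
      (fun w => stage_cost piin piout pigrid pirev (beta t) a
                  (fun i => X i t w) (fun i => Y i t w) C).

End Cost.

Definition convex_on_nonneg {R : realType} {n : nat} (f : ('I_n -> R) -> R) : Prop :=
  forall (C1 C2 : 'I_n -> R) (l : R),
    (forall i, 0 <= C1 i) -> (forall i, 0 <= C2 i) -> 0 <= l <= 1 ->
    f (fun i => l * C1 i + (1 - l) * C2 i) <= l * f C1 + (1 - l) * f C2.

(** The stage cost depends on the allocation only through P_out and C_a. As a
    function of (P_out, C_a) it is convex (a linear part plus nonnegative
    multiples of positive parts of affine maps), and it is nonincreasing in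
    P_out because selling one more unit earns pi_out while it can raise the
    grid term by at most pi_grid <= pi_out. Since P_out is concave in the
    allocation (a sum of minima of a constant and a coordinate) and C_a is
    linear, the stage cost is convex in the allocation for every realisation;
    taking expectations, summing over t and adding the linear storage cost
    preserve convexity. *)

From HB Require Import structures.
From mathcomp Require Import all_boot all_order all_algebra.
From mathcomp Require Import all_classical all_reals all_analysis.
From mathcomp Require Import ring lra.
Import Order.TTheory GRing.Theory Num.Theory.
Local Open Scope ring_scope.

Section ConvexCombination.
Context {R : realDomainType}.
Implicit Types (l x y : R).

Lemma sumr_convex_comb (I : finType) l (f g : I -> R) :
  \sum_i (l * f i + (1 - l) * g i) = l * \sum_i f i + (1 - l) * \sum_i g i.
Proof. by rewrite big_split /= -!mulr_sumr. Qed.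

Lemma maxr0_convex l x y : 0 <= l <= 1 ->
  Num.max (l * x + (1 - l) * y) 0 <= l * Num.max x 0 + (1 - l) * Num.max y 0.
Proof.
case/andP=> l_ge0 l_le1; have l'_ge0 : 0 <= 1 - l by rewrite subr_ge0.
rewrite ge_max; apply/andP; split.
  by apply: lerD; apply: ler_wpM2l => //; rewrite le_max lexx.
by apply: addr_ge0; apply: mulr_ge0 => //; rewrite le_max lexx orbT.
Qed.

Lemma minr_concave l x (c c' : R) : 0 <= l <= 1 ->
  l * Num.min x c + (1 - l) * Num.min x c' <= Num.min x (l * c + (1 - l) * c').
Proof.
case/andP=> l_ge0 l_le1; have l'_ge0 : 0 <= 1 - l by rewrite subr_ge0.
rewrite le_min; apply/andP; split.
  rewrite -[leRHS](_ : l * x + (1 - l) * x = x); last by ring.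
  by apply: lerD; apply: ler_wpM2l => //; rewrite ge_min lexx.
by apply: lerD; apply: ler_wpM2l => //; rewrite ge_min lexx orbT.
Qed.

End ConvexCombination.

Section SettlementCost.
Context {R : realDomainType}.
Variables (piin piout pigrid pirev b : R).
Hypotheses (hgrid : 0 <= pigrid) (hrev : 0 <= pirev) (hout : pigrid <= piout).

Definition settlement_cost (Pi Po Ca : R) : R :=
  piin * Pi - piout * Po + pigrid * Num.max (Po - Pi - b * Ca) 0
  + pirev * Num.max (Pi - Po - (1 - b) * Ca) 0.

Lemma settlement_cost_nonincr (Pi Po Po' Ca : R) : Po <= Po' ->
  settlement_cost Pi Po' Ca <= settlement_cost Pi Po Ca.
Proof.
move=> le_Po; rewrite /settlement_cost.
set M := Num.max (Po - Pi - b * Ca) 0.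
have grid_le : Num.max (Po' - Pi - b * Ca) 0 <= M + (Po' - Po).
  have : Po - Pi - b * Ca <= M by rewrite le_max lexx.
  have : 0 <= M by rewrite le_max lexx orbT.
  by rewrite ge_max; lra.
have rev_le : Num.max (Pi - Po' - (1 - b) * Ca) 0
              <= Num.max (Pi - Po - (1 - b) * Ca) 0.
  by rewrite le_max2 // lerD2r lerD2l lerN2.
have := ler_wpM2l hgrid grid_le; have := ler_wpM2l hrev rev_le.
have : pigrid * (Po' - Po) <= piout * (Po' - Po) by rewrite ler_wpM2r ?subr_ge0.
lra.
Qed.

Lemma settlement_cost_convex (l Pi Po1 Po2 Ca1 Ca2 : R) : 0 <= l <= 1 ->
  settlement_cost Pi (l * Po1 + (1 - l) * Po2) (l * Ca1 + (1 - l) * Ca2)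
  <= l * settlement_cost Pi Po1 Ca1 + (1 - l) * settlement_cost Pi Po2 Ca2.
Proof.
move=> hl; rewrite /settlement_cost.
have := ler_wpM2l hgrid
  (maxr0_convex l (Po1 - Pi - b * Ca1) (Po2 - Pi - b * Ca2) hl).
have := ler_wpM2l hrev
  (maxr0_convex l (Pi - Po1 - (1 - b) * Ca1) (Pi - Po2 - (1 - b) * Ca2) hl).
have -> : l * (Po1 - Pi - b * Ca1) + (1 - l) * (Po2 - Pi - b * Ca2)
  = l * Po1 + (1 - l) * Po2 - Pi - b * (l * Ca1 + (1 - l) * Ca2) by ring.
have -> : l * (Pi - Po1 - (1 - b) * Ca1) + (1 - l) * (Pi - Po2 - (1 - b) * Ca2)
  = Pi - (l * Po1 + (1 - l) * Po2) - (1 - b) * (l * Ca1 + (1 - l) * Ca2) by ring.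
lra.
Qed.

End SettlementCost.

Section StageCost.
Variables (R : realType) (n : nat) (a x y : 'I_n -> R).

Lemma stage_costE piin piout pigrid pirev b (C : 'I_n -> R) :
  stage_cost piin piout pigrid pirev b a x y C
  = settlement_cost piin piout pigrid pirev b
      (P_in a x y) (P_out a x y C) (\sum_i C i).
Proof. by []. Qed.

Lemma P_out_concave (C1 C2 : 'I_n -> R) l : 0 <= l <= 1 ->
  l * P_out a x y C1 + (1 - l) * P_out a x y C2
  <= P_out a x y (fun i => l * C1 i + (1 - l) * C2 i).
Proof.
by move=> hl; rewrite -sumr_convex_comb; apply: ler_sum => i _; apply: minr_concave.
Qed.

Lemma stage_cost_convex piin piout pigrid pirev b (C1 C2 : 'I_n -> R) l :
  0 <= pigrid -> 0 <= pirev -> pigrid <= piout -> 0 <= l <= 1 ->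
  stage_cost piin piout pigrid pirev b a x y (fun i => l * C1 i + (1 - l) * C2 i)
  <= l * stage_cost piin piout pigrid pirev b a x y C1
     + (1 - l) * stage_cost piin piout pigrid pirev b a x y C2.
Proof.
move=> hgrid hrev hout hl; rewrite !stage_costE sumr_convex_comb.
apply: le_trans (settlement_cost_convex _ _ _ _ _ hgrid hrev _ _ _ _ _ _ hl).
by apply: settlement_cost_nonincr => //; apply: P_out_concave.
Qed.

End StageCost.

Section Integrability.
Context {d} {T : measurableType d} {R : realType} {mu : {measure set T -> \bar R}}.
Local Notation integrable f := (mu.-integrable setT (EFin \o f)).
Implicit Types (f g h : T -> R) (k l : R).

Lemma integrableD_EFin f g : integrable f -> integrable g ->
  integrable (fun w => f w + g w).
Proof.
by move=> If Ig; apply: eq_integrable (integrableD measurableT If Ig).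
Qed.

Lemma integrableN_EFin f : integrable f -> integrable (fun w => - f w).
Proof. by move=> If; apply: eq_integrable (integrableN If). Qed.

Lemma integrableZl_EFin k f : integrable f -> integrable (fun w => k * f w).
Proof.
by move=> If; apply: eq_integrable (integrableZl measurableT k If).
Qed.

Lemma integrable_sum_EFin (I : finType) (F : I -> T -> R) :
  (forall i, integrable (F i)) -> integrable (fun w => \sum_i F i w).
Proof.
move=> IF; apply: eq_integrable
  (integrable_sum measurableT _ (P := xpredT) (fun i _ => IF i)) => // w _.
by rewrite /= sumEFin.
Qed.

Lemma integrable_maxr0 f : integrable f -> integrable (fun w => Num.max (f w) 0).
Proof. exact: integrable_funrpos. Qed.

Lemma le_Rintegral_convex_comb l f g h :
  integrable f -> integrable g -> integrable h ->
  (forall w, h w <= l * f w + (1 - l) * g w) ->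
  \int[mu]_w h w <= l * \int[mu]_w f w + (1 - l) * \int[mu]_w g w.
Proof.
move=> If Ig Ih le_h.
rewrite -!RintegralZl // -RintegralD //;
  try by apply: integrableZl_EFin.
by apply: le_Rintegral => //; apply/integrableD_EFin; apply: integrableZl_EFin.
Qed.

End Integrability.

Section FiniteMeasureIntegrability.
Context {d} {T : measurableType d} {R : realType} (mu : {finite_measure set T -> \bar R}).
Local Notation integrable f := (mu.-integrable setT (EFin \o f)).

Lemma integrable_minr (f : T -> R) k : integrable f ->
  integrable (fun w => Num.min (f w) k).
Proof.
move=> If.
have -> : (fun w => Num.min (f w) k) = fun w => f w - Num.max (f w - k) 0.
  apply/funext => w; have [le_fk|lt_kf] := leP (f w) k.
    by rewrite max_r ?subr_le0 // subr0.
  by rewrite max_l ?subr_ge0 ?ltW // opprB addrC subrK.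
apply: integrableD_EFin => //; apply/integrableN_EFin/integrable_maxr0.
apply: integrableD_EFin => //; apply/integrableN_EFin.
exact: finite_measure_integrable_cst.
Qed.

Lemma stage_cost_integrable n piin piout pigrid pirev b (a C : 'I_n -> R)
    (X Y : 'I_n -> T -> R) :
  (forall i, integrable (X i)) -> (forall i, integrable (Y i)) ->
  integrable (fun w => stage_cost piin piout pigrid pirev b a
                         (fun i => X i w) (fun i => Y i w) C).
Proof.
move=> IX IY; rewrite /stage_cost /P_in /P_out /=.
repeat first
  [ apply: integrableD_EFin | apply: integrableN_EFin | apply: integrableZl_EFin
  | apply: integrable_sum_EFin => ? | apply: integrable_maxr0
  | apply: integrable_minr | apply: finite_measure_integrable_cst
  | exact: measurableT | exact: IX | exact: IY ].
Qed.

End FiniteMeasureIntegrability.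

Theorem lemma3 (R : realType) (d : measure_display) (Omega : measurableType d)
  (Pr : probability Omega R) (n T : nat)
  (X Y : 'I_n -> 'I_T -> Omega -> R) (a : 'I_n -> R) (beta : 'I_T -> R)
  (piB piin piout pigrid pirev : R)
  (hXm : forall i t, measurable_fun setT (X i t))
  (hYm : forall i t, measurable_fun setT (Y i t))
  (hXi : forall i t, Pr.-integrable setT (EFin \o X i t))
  (hYi : forall i t, Pr.-integrable setT (EFin \o Y i t))
  (ha : forall i, 0 <= a i)
  (hbeta : forall t, 0 <= beta t <= 1)
  (hgrid : 0 <= pigrid) (hrev : 0 <= pirev)
  (hout : pigrid <= piout) :
  convex_on_nonneg (J_a Pr X Y a beta piB piin piout pigrid pirev).
Proof.
move=> C1 C2 l _ _ hl.
pose cost t C w := stage_cost piin piout pigrid pirev (beta t) a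
                     (fun i => X i t w) (fun i => Y i t w) C.
have cost_int t C : Pr.-integrable setT (EFin \o cost t C).
  exact: stage_cost_integrable.
have Ecost_convex t : \int[Pr]_w cost t (fun i => l * C1 i + (1 - l) * C2 i) w
    <= l * \int[Pr]_w cost t C1 w + (1 - l) * \int[Pr]_w cost t C2 w.
  by apply: le_Rintegral_convex_comb => // w; apply: stage_cost_convex.
rewrite /J_a sumr_convex_comb !mulrDr addrACA !(mulrCA _ piB) lerD2l.
apply: le_trans (ler_sum _ (fun t _ => Ecost_convex t)) _.
by rewrite sumr_convex_comb.
Qed.
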